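(* Let $U:\mathbb{C}^*\to\mathbb{C}$ be a reasonable expansion with unique restrictions, between locally small categories, which has the expansion property, and assume that all morphisms in $\mathbb{C}$ are monomorphisms and that $\mathbb{C}^*$ is directed. Then for every $A\in\mathrm{Ob}(\mathbb{C})$, $$t_{\mathbb{C}}(A)=\sum_{\mathcal{A}\in U^{-1}(A)}t_{\mathbb{C}^*}(\mathcal{A}).$$ Consequently, $t_{\mathbb{C}}(A)$ is finite if and only if $U^{-1}(A)$ is finite and $t_{\mathbb{C}^*}(\mathcal{A})<\infty$ for all $\mathcal{A}\in U^{-1}(A)$.
   Context: Write $X\to Y$ if $\hom(X,Y)\ne\varnothing$; a category is directed if for all objects $A,B$ there is $C$ with $A\to C$, $B\to C$. An expansion of $\mathbb{C}$ is a category $\mathbb{C}^*$ with a functor $U:\mathbb{C}^*\to\mathbb{C}$ surjective on objects and injective on hom-sets; we regard $\hom_{\mathbb{C}^*}(\mathcal{A},\mathcal{B})\subseteq\hom_{\mathbb{C}}(U\mathcal{A},U\mathcal{B})$, and $U^{-1}(A)=\{\mathcal{A}:U(\mathcal{A})=A\}$. $U$ is reasonable if for every $e\in\hom(A,B)$ and $\mathcal{A}\in U^{-1}(A)$ there is $\mathcal{B}\in U^{-1}(B)$ with $e\in\hom(\mathcal{A},\mathcal{B})$; it has unique restrictions if for every $\mathcal{B}$ and $e\in\hom(A,U(\mathcal{B}))$ there is exactly one $\mathcal{A}\in U^{-1}(A)$ with $e\in\hom(\mathcal{A},\mathcal{B})$; it has the expansion property if for every $A\in\mathrm{Ob}(\mathbb{C})$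 there is $B\in\mathrm{Ob}(\mathbb{C})$ with $\mathcal{A}\to\mathcal{B}$ for all $\mathcal{A}\in U^{-1}(A)$, $\mathcal{B}\in U^{-1}(B)$. In a category $\mathbb{D}$: $C\to(B)^A_{k,t}$ means that for every $\chi:\hom(A,C)\to\{0,\dots,k-1\}$ there is $w\in\hom(B,C)$ with $|\chi(w\cdot\hom(A,B))|\le t$; $t_{\mathbb{D}}(A)$ is the least positive $n$ such that for all $k\ge2$ and all $B$ there is $C$ with $C\to(B)^A_{k,n}$, and $\infty$ otherwise. A sum with an infinite term or infinitely many terms is $\infty$. *)

From mathcomp Require Import all_boot.
From mathcomp Require Import boolp.
From Stdlib Require List.

Set Implicit Arguments.
Unset Strict Implicit.
Unset Printing Implicit Defensive.

Record category := Category {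
  Ob : Type;
  Hom : Ob -> Ob -> Type;
  comp : forall {A B C : Ob}, Hom B C -> Hom A B -> Hom A C;
  idm : forall A : Ob, Hom A A;
  comp_assoc : forall (A B C D : Ob) (h : Hom C D) (g : Hom B C) (f : Hom A B),
      comp h (comp g f) = comp (comp h g) f;
  comp_idl : forall (A B : Ob) (f : Hom A B), comp (idm B) f = f;
  comp_idr : forall (A B : Ob) (f : Hom A B), comp f (idm A) = f
}.
Arguments comp {c A B C}.
Arguments Hom {c}.

Definition arrow (D : category) (X Y : Ob D) : Prop := inhabited (Hom X Y).

Definition directed (D : category) : Prop :=
  forall A B : Ob D, exists C : Ob D, arrow A C /\ arrow B C.

Definition all_mono (D : category) : Prop :=
  forall (A B C : Ob D) (h : Hom B C) (f g : Hom A B), comp h f = comp h g -> f = g.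

Record functor (D E : category) := Functor {
  Fob : Ob D -> Ob E;
  Fhom : forall {A B : Ob D}, Hom A B -> Hom (Fob A) (Fob B);
  Fcomp : forall (A B C : Ob D) (g : Hom B C) (f : Hom A B),
      Fhom (comp g f) = comp (Fhom g) (Fhom f);
  Fid : forall A : Ob D, Fhom (idm A) = idm (Fob A)
}.
Arguments Fob {D E}.
Arguments Fhom {D E} _ {A B}.

Definition expansion (Cs C : category) (U : functor Cs C) : Prop :=
  (forall A : Ob C, exists As : Ob Cs, Fob U As = A) /\
  (forall (As Bs : Ob Cs) (f g : Hom As Bs), Fhom U f = Fhom U g -> f = g).

(* "e ∈ hom(As, Bs)" for e ∈ hom_C(A,B), with U As = A and U Bs = B:
   e is the image under U of a C*-morphism As -> Bs. *)
Definition lifts (Cs C : category) (U : functor Cs C) (As Bs : Ob Cs)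
    (A B : Ob C) (e : Hom A B) : Prop :=
  exists (p : Fob U As = A) (q : Fob U Bs = B) (e' : Hom As Bs),
    eq_rect _ (fun Y => Hom A Y)
      (eq_rect _ (fun X => Hom X (Fob U Bs)) (Fhom U e') A p) B q = e.

Definition reasonable (Cs C : category) (U : functor Cs C) : Prop :=
  forall (A B : Ob C) (e : Hom A B) (As : Ob Cs), Fob U As = A ->
    exists Bs : Ob Cs, lifts U As Bs e.

Definition unique_restrictions (Cs C : category) (U : functor Cs C) : Prop :=
  forall (Bs : Ob Cs) (A : Ob C) (e : Hom A (Fob U Bs)),
    exists! As : Ob Cs, lifts U As Bs e.

Definition expansion_property (Cs C : category) (U : functor Cs C) : Prop :=
  forall A : Ob C, exists B : Ob C, forall As Bs : Ob Cs,
    Fob U As = A -> Fob U Bs = B -> arrow As Bs.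

Definition ramsey_arrow (D : category) (C B A : Ob D) (k t : nat) : Prop :=
  forall chi : Hom A C -> 'I_k, exists w : Hom B C,
    #|[set i : 'I_k | `[< exists f : Hom A B, chi (comp w f) = i >]]| <= t.

Definition ramsey_bound (D : category) (A : Ob D) (n : nat) : Prop :=
  forall k : nat, 2 <= k -> forall B : Ob D, exists C : Ob D, ramsey_arrow C B A k n.

(* Ramsey degree t_D(A): Some n = least positive n with the property; None = ∞ *)
Definition t_deg (D : category) (A : Ob D) : option nat :=
  match pselect (exists n, `[< 0 < n /\ ramsey_bound A n >]) with
  | left H => Some (ex_minn H)
  | right _ => None
  end.

(* sum in N ∪ {∞} (None = ∞) *)
Definition osum (l : list (option nat)) : option nat :=
  foldr (fun a b => match a, b with Some x, Some y => Some (x + y) | _, _ => None end)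
        (Some 0) l.

Definition fiber_enum (Cs C : category) (U : functor Cs C) (A : Ob C)
    (l : list (Ob Cs)) : Prop :=
  List.NoDup l /\ forall As : Ob Cs, List.In As l <-> Fob U As = A.

Definition fiber_finite (Cs C : category) (U : functor Cs C) (A : Ob C) : Prop :=
  exists l, fiber_enum U A l.

(* \sum_{As ∈ U^{-1}(A)} t_{C*}(As); infinitely many terms gives ∞ *)
Definition fiber_sum (Cs C : category) (U : functor Cs C) (A : Ob C) : option nat :=
  match pselect (fiber_finite U A) with
  | left H => osum (map (@t_deg Cs) (proj1_sig (cid H)))
  | right _ => None
  end.

From Pilot Require Import Defs.
From mathcomp Require Import all_boot.
From mathcomp Require Import boolp.
From Stdlib Require List.

Set Implicit Arguments.
Unset Strict Implicit.
Unset Printing Implicit Defensive.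

(* By unique restrictions, every morphism A -> U(B) is the image of a morphism
   X -> B for exactly one X in the fiber U^{-1}(A), so a colouring of
   hom(A, U(C)) is the same thing as a family of colourings of the hom(X, C).
   Upper bound: using the Ramsey property of the fiber members one after the
   other gives one copy of B on which every X shows at most t(X) colours, hence
   A shows at most their sum.  Lower bound: take for each X a bad colouring
   witnessed on some B_X; directedness and the expansion property give an
   object B of C all of whose expansions receive every B_X, and colouring
   hom(A, U(C)) with a separate palette for each X forces at least sum t(X)
   colours on every copy of B.  An infinite fiber, or a member of infinite
   degree, makes this lower bound exceed every n. *)

Lemma leq_card_cover (I : Type) (T : finType) (l : seq I) (S_ : I -> {set T})
    (n : I -> nat) (S : {set T}) :
  (forall c, c \in S -> exists2 x, List.In x l & c \in S_ x) ->
  (forall x, List.In x l -> #|S_ x| <= n x) ->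
  #|S| <= \sum_(x <- l) n x.
Proof.
elim: l S => [|x l IH] S cover bound.
  rewrite big_nil leqn0 cards_eq0; apply/eqP/setP => c; rewrite inE.
  by apply/negbTE/negP => /cover [].
rewrite big_cons -(cardsID (S_ x) S) leq_add //.
  exact: leq_trans (subset_leq_card (subsetIr _ _)) (bound x (or_introl erefl)).
apply: IH => [c /setDP [/cover [y [<- | yl] cy] ncx] | y yl].
- by rewrite cy in ncx.
- by exists y.
- exact: bound y (or_intror yl).
Qed.

Lemma leq_sum_card_tagged (I : finType) (T_ : I -> finType) (S : {set {i : I & T_ i}}) :
  \sum_(i : I) #|[set c : T_ i | Tagged T_ c \in S]| <= #|S|.
Proof.
rewrite -sum1_card (partition_big tag predT) //=; apply: leq_sum => i _.
rewrite sum1_card -(card_imset _ (@eq_from_Tagged I T_ i)); apply: subset_leq_card.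
by apply/subsetP => u /imsetP [c]; rewrite !inE => Sc ->; apply/andP.
Qed.

Lemma extension_on_images (I : Type) (Y : I -> Type) (X T : Type)
    (emb : forall i, Y i -> X) (col : forall i, Y i -> T) (d : T) :
  (forall i j (y : Y i) (y' : Y j), emb i y = emb j y' -> col i y = col j y') ->
  exists chi : X -> T, forall i y, chi (emb i y) = col i y.
Proof.
move=> consistent.
exists (fun x => if pselect (exists i y, emb i y = x) is left ex
  then col (sval (cid ex)) (sval (cid (svalP (cid ex)))) else d).
move=> i y; case: pselect => [ex|]; last by case; exists i, y.
by apply: consistent; rewrite (svalP (cid (svalP (cid ex)))).
Qed.

Lemma osum_map_Some (T : Type) (l : seq T) (f : T -> option nat) (g : T -> nat) :
  (forall x, List.In x l -> f x = Some (g x)) ->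
  osum (map f l) = Some (\sum_(x <- l) g x).
Proof.
elim: l => [|x l IH] fg; first by rewrite big_nil.
by rewrite /= big_cons fg ?IH //; [move=> y yl; apply: fg; right | left].
Qed.

Lemma osum_map_None (T : Type) (l : seq T) (f : T -> option nat) :
  osum (map f l) = None <-> exists2 x, List.In x l & f x = None.
Proof.
elim: l => [|x l IH]; first by split => // -[].
rewrite /= -/(osum _); case fx: (f x) => [a|]; last by split => // _; exists x => //; left.
case: osum IH => [b|] IH; split => //.
- by case=> y [<-|yl fy]; [rewrite fx | have := IH.2 (ex_intro2 _ _ y yl fy)].
- by case/IH.1 => y yl fy; exists y => //; right.
Qed.

Lemma In_nth (T : Type) (s : seq T) (d : T) (k : nat) :
  k < size s -> List.In (nth d s k) s.
Proof. by elim: s k => [|x s IH] [|k] //= lt; [left | right; apply: IH]. Qed.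

Lemma NoDup_nth_inj (T : Type) (l : seq T) (d : T) (i j : nat) :
  List.NoDup l -> i < size l -> j < size l -> nth d l i = nth d l j -> i = j.
Proof.
elim: l i j => [|x l IH] [|i] [|j] //= /List.NoDup_cons_iff [xl nd] lti ltj.
- by move=> xE; case: xl; rewrite xE; apply: In_nth.
- by move=> xE; case: xl; rewrite -xE; apply: In_nth.
- by move/(IH _ _ nd lti ltj) ->.
Qed.

Section RamseyDegree.

Variable D : category.

Definition colors (T : finType) (A B C : Ob D) (chi : Hom A C -> T) (w : Hom B C) :
    {set T} :=
  [set c | `[< exists f : Hom A B, chi (Defs.comp w f) = c >]].

Lemma colorsP (T : finType) (A B C : Ob D) (chi : Hom A C -> T) (w : Hom B C) c :
  reflect (exists f : Hom A B, chi (Defs.comp w f) = c) (c \in colors chi w).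
Proof. by rewrite inE; apply: asboolP. Qed.

Lemma colors_comp (T : finType) (A B B' C : Ob D) (chi : Hom A C -> T)
    (w : Hom B' C) (v : Hom B B') :
  colors chi (Defs.comp w v) = colors (fun g => chi (Defs.comp w g)) v.
Proof.
by apply/setP => c; apply/colorsP/colorsP => -[f <-]; exists f; rewrite comp_assoc.
Qed.

Lemma colors_comp_sub (T : finType) (A B B' C : Ob D) (chi : Hom A C -> T)
    (w : Hom B' C) (v : Hom B B') :
  colors chi (Defs.comp w v) \subset colors chi w.
Proof.
by apply/subsetP => c /colorsP [f <-]; apply/colorsP; exists (Defs.comp v f); rewrite comp_assoc.
Qed.

Lemma arrow_trans (X Y Z : Ob D) : arrow X Y -> arrow Y Z -> arrow X Z.
Proof. by move=> [f] [g]; constructor; apply: Defs.comp g f. Qed.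

Lemma directed_seq_bound (I : eqType) (F : I -> Ob D) (s : seq I) (X : Ob D) :
  directed D -> exists Y, arrow X Y /\ forall i, i \in s -> arrow (F i) Y.
Proof.
move=> dirD; elim: s => [|i s [Y [XY sY]]]; first by exists X; split => //; constructor; apply: idm.
have [Z [YZ iZ]] := dirD Y (F i); exists Z; split; first exact: arrow_trans XY YZ.
by move=> j; rewrite in_cons => /predU1P [-> | /sY jY] //; apply: arrow_trans jY YZ.
Qed.

Lemma ramsey_bound_gt0 (A : Ob D) (n : nat) : ramsey_bound A n -> 0 < n.
Proof.
move=> /(_ 2 erefl A) [C /(_ (fun _ => ord0)) [w le_n]].
apply: leq_trans le_n; rewrite card_gt0; apply/set0Pn; exists ord0.
by rewrite inE; apply/asboolP; exists (idm A).
Qed.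

Lemma ramsey_bound_finType (A : Ob D) (n : nat) (T : finType) :
  ramsey_bound A n -> 2 <= #|T| -> forall B : Ob D, exists C : Ob D,
    forall chi : Hom A C -> T, exists w : Hom B C, #|colors chi w| <= n.
Proof.
move=> rbA T2 B; have [C rbC] := rbA _ T2 B; exists C => chi.
have [w le_n] := rbC (enum_rank \o chi); exists w; apply: leq_trans le_n.
rewrite -(card_imset _ (@enum_rank_inj T)); apply: subset_leq_card.
by apply/subsetP => _ /imsetP [c /colorsP [f <-] ->]; apply/colorsP; exists f.
Qed.

Lemma ramsey_bound_simultaneous (l : seq (Ob D)) (n : Ob D -> nat) (k : nat) :
  (forall X, List.In X l -> ramsey_bound X (n X)) -> 2 <= k ->
  forall B : Ob D, exists C : Ob D, forall chi : forall X : Ob D, Hom X C -> 'I_k,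
    exists w : Hom B C, forall X, List.In X l -> #|colors (chi X) w| <= n X.
Proof.
move=> + k2; elim: l => [|X l IH] rb B; first by exists B => chi; exists (idm B).
have [C1 rbX] := rb X (or_introl erefl) k k2 B.
have [C rbl] := IH (fun Y Yl => rb Y (or_intror Yl)) C1.
exists C => chi; have [w2 w2l] := rbl chi.
have [w1 w1X] := rbX (fun g => chi X (Defs.comp w2 g)).
exists (Defs.comp w2 w1) => Y [<- | Yl]; first by rewrite colors_comp.
exact: leq_trans (subset_leq_card (colors_comp_sub _ _ _)) (w2l Y Yl).
Qed.

Definition ramsey_failure (A B : Ob D) (k t : nat) : Prop :=
  forall C : Ob D, exists chi : Hom A C -> 'I_k, forall w : Hom B C, t <= #|colors chi w|.

Lemma ramsey_failure_of_lower_bound (A : Ob D) (t : nat) :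
  (forall n, ramsey_bound A n -> t <= n) ->
  exists k, 2 <= k /\ exists B : Ob D, ramsey_failure A B k t.
Proof.
case: t => [_ | t t_low].
  by exists 2; split => //; exists A => C; exists (fun _ => ord0).
apply: contrapT => no_failure.
suff /t_low : ramsey_bound A t by rewrite ltnn.
move=> k k2 B; apply: contrapT => /forallNP noC; apply: no_failure.
exists k; split => //; exists B => C.
have /existsNP [chi /forallNP no_w] := noC C; exists chi => w.
by rewrite ltnNge; apply/negP => le_t; apply: (no_w w).
Qed.

Lemma t_deg_SomeP (A : Ob D) (m : nat) :
  t_deg A = Some m <-> ramsey_bound A m /\ forall n, ramsey_bound A n -> m <= n.
Proof.
have pos_bound n : ramsey_bound A n -> `[< 0 < n /\ ramsey_bound A n >].
  by move=> rbn; apply/asboolP; split => //; apply: ramsey_bound_gt0 rbn.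
rewrite /t_deg; case: pselect => [ex | nex]; last first.
  by split => // -[/pos_bound rbm _]; case: nex; exists m.
case: ex_minnP => m0 /asboolP [_ rbm0] min0; split => [[<-] | [rbm minm]].
  by split => // n /pos_bound /min0.
by congr Some; apply/eqP; rewrite eqn_leq minm // min0 // pos_bound.
Qed.

Lemma t_deg_NoneP (A : Ob D) : t_deg A = None <-> forall n, ~ ramsey_bound A n.
Proof.
rewrite /t_deg; case: pselect => [ex | nex]; split => //.
- by move=> /(_ (ex_minn ex)); case: ex_minnP => n /asboolP [].
- by move=> _ n rbn; apply: nex; exists n; apply/asboolP; split => //; apply: ramsey_bound_gt0 rbn.
Qed.

End RamseyDegree.

Section Expansion.

Variables (Cs C : category) (U : functor Cs C).

Definition cast (X A : Ob C) (p : X = A) (Y : Ob C) (h : Hom X Y) : Hom A Y :=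
  eq_rect X (fun Z => Hom Z Y) h A p.

Lemma cast_comp (X A : Ob C) (p : X = A) (Y Z : Ob C) (g : Hom Y Z) (h : Hom X Y) :
  cast p (Defs.comp g h) = Defs.comp g (cast p h).
Proof. by case: A / p. Qed.

Lemma cast_inj (X A : Ob C) (p : X = A) (Y : Ob C) : injective (@cast X A p Y).
Proof. by case: A / p. Qed.

Lemma liftsP (As Bs : Ob Cs) (A : Ob C) (e : Hom A (Fob U Bs)) :
  lifts U As Bs e <->
  exists (p : Fob U As = A) (e' : Hom As Bs), cast p (Fhom U e') = e.
Proof.
split => [[p [q [e' <-]]] | [p [e' <-]]]; last by exists p, erefl, e'.
by exists p, e'; rewrite (Prop_irrelevance q erefl).
Qed.

Definition restrict_coloring (A : Ob C) (Z : Ob Cs) (T : Type) (d : T)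
    (chi : Hom A (Fob U Z) -> T) (X : Ob Cs) (g : Hom X Z) : T :=
  if pselect (Fob U X = A) is left p then chi (cast p (Fhom U g)) else d.
Arguments restrict_coloring {A Z T} d chi X g.

Lemma restrict_coloringE (A : Ob C) (Z : Ob Cs) (T : Type) (d : T)
    (chi : Hom A (Fob U Z) -> T) (X : Ob Cs) (p : Fob U X = A) (g : Hom X Z) :
  restrict_coloring d chi X g = chi (cast p (Fhom U g)).
Proof. by rewrite /restrict_coloring; case: pselect => // p'; rewrite (Prop_irrelevance p' p). Qed.

Hypotheses (Uexp : expansion U) (UR : unique_restrictions U).

Lemma colors_fiber_cover (A : Ob C) (l : seq (Ob Cs)) (B Z : Ob Cs) (T : finType)
    (d : T) (chi : Hom A (Fob U Z) -> T) (w : Hom B Z) :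
  (forall X, Fob U X = A -> List.In X l) ->
  forall c, c \in colors chi (Fhom U w) ->
    exists2 X, List.In X l & c \in colors (restrict_coloring d chi X) w.
Proof.
move=> l_fiber c /colorsP [f <-].
have [X [/liftsP [XA [g <-]] _]] := UR f.
exists X; first exact: l_fiber.
by apply/colorsP; exists g; rewrite (restrict_coloringE _ _ XA) Fcomp cast_comp.
Qed.

Lemma ramsey_bound_fiber_sum (A : Ob C) (l : seq (Ob Cs)) (n : Ob Cs -> nat) :
  fiber_enum U A l -> (forall X, List.In X l -> ramsey_bound X (n X)) ->
  ramsey_bound A (\sum_(X <- l) n X).
Proof.
move=> [_ l_fiber] rb k k2 B.
have [B0 <-] := Uexp.1 B.
have [Z rbZ] := ramsey_bound_simultaneous rb k2 B0.
exists (Fob U Z) => chi.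
have [w w_le] := rbZ (restrict_coloring (Ordinal (ltnW k2)) chi).
exists (Fhom U w); apply: leq_card_cover w_le.
by apply: colors_fiber_cover => X /l_fiber.
Qed.

Hypotheses (EP : expansion_property U) (dirCs : directed Cs).

Lemma expansion_upper_bound (J : finType) (F : J -> Ob Cs) (j0 : J) :
  exists B : Ob C, forall X, Fob U X = B -> forall j, arrow (F j) X.
Proof.
have [Y [_ FY]] := directed_seq_bound F (enum J) (F j0) dirCs.
have [B YB] := EP (Fob U Y); exists B => X XB j.
by apply: arrow_trans (FY j _) (YB Y X erefl XB); rewrite mem_enum.
Qed.

Section FiberFamily.

Variables (A : Ob C) (I : finType) (As : I -> Ob Cs).
Hypotheses (As_inj : injective As) (As_fiber : forall i, Fob U (As i) = A).

Lemma fiber_coloring_extension (Z : Ob Cs) (T : Type) (d : T)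
    (col : forall i, Hom (As i) Z -> T) :
  exists chi : Hom A (Fob U Z) -> T,
    forall i g, chi (cast (As_fiber i) (Fhom U g)) = col i g.
Proof.
apply: extension_on_images d _ => i j g g' E.
have ij : i = j.
  apply: As_inj; have [X [_ X_uniq]] := UR (cast (As_fiber j) (Fhom U g')).
  rewrite -(X_uniq (As i)) ?(X_uniq (As j)) //; apply/liftsP.
    by exists (As_fiber j), g'.
  by exists (As_fiber i), g.
by subst j; move/cast_inj/(Uexp.2): E => ->.
Qed.

Lemma ramsey_bound_fiber_lower (t : I -> nat) (n : nat) :
  (forall i m, ramsey_bound (As i) m -> t i <= m) ->
  ramsey_bound A n -> \sum_i t i <= n.
Proof.
move=> t_low rbA; have [i0 _ | I0] := pickP (@predT I); last by rewrite big_pred0.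
have /choice [kB kB_fail] : forall i, exists kB : nat * Ob Cs,
    2 <= kB.1 /\ ramsey_failure (As i) kB.2 kB.1 (t i).
  move=> i; have [k [k2 [B fail]]] := ramsey_failure_of_lower_bound (t_low i).
  by exists (k, B).
pose k i := (kB i).1.
have [B B_up] := expansion_upper_bound (fun i => (kB i).2) i0.
have T2 : 2 <= #|{: {i : I & 'I_(k i)}}|.
  apply: leq_trans (proj1 (kB_fail i0)) _; rewrite -[X in X <= _]card_ord.
  by rewrite -(card_imset _ (@eq_from_Tagged I (fun i => 'I_(k i)) i0)) max_card.
have [Z0 rbZ] := ramsey_bound_finType rbA T2 B.
have [Z ZZ0] := Uexp.1 Z0; subst Z0.
pose chis i := sval (cid ((kB_fail i).2 Z)).
have [chi chiE] := fiber_coloring_extension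
  (Tagged (fun i => 'I_(k i)) (Ordinal (ltnW (kB_fail i0).1)))
  (fun i g => Tagged (fun i => 'I_(k i)) (chis i g)).
have [w w_le] := rbZ chi.
have [X [/liftsP [XB [w' Ew]] _]] := UR w; subst B w.
apply: leq_trans w_le; apply: leq_trans (leq_sum_card_tagged _); apply: leq_sum => i _.
have [v] := B_up X erefl i.
apply: leq_trans (svalP (cid ((kB_fail i).2 Z)) (Defs.comp w' v)) (subset_leq_card _).
apply/subsetP => c /colorsP [g <-]; rewrite inE; apply/colorsP.
exists (cast (As_fiber i) (Fhom U (Defs.comp v g))).
by rewrite -cast_comp -Fcomp chiE comp_assoc.
Qed.

End FiberFamily.

Lemma ramsey_bound_fiber_lower_seq (A : Ob C) (l : seq (Ob Cs)) (t : Ob Cs -> nat) (n : nat) :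
  List.NoDup l -> (forall X, List.In X l -> Fob U X = A) ->
  (forall X, List.In X l -> forall m, ramsey_bound X m -> t X <= m) ->
  ramsey_bound A n -> \sum_(X <- l) t X <= n.
Proof.
case: l => [|d l']; first by rewrite big_nil.
set l := d :: l' => nd l_fiber t_low.
rewrite (big_nth d) big_mkord.
apply: (@ramsey_bound_fiber_lower A _ (fun i : 'I_(size l) => nth d l i)) => [i j|i|i].
- by move/(NoDup_nth_inj nd (ltn_ord i) (ltn_ord j)); apply: val_inj.
- exact/l_fiber/In_nth.
- exact/t_low/In_nth.
Qed.

Lemma infinite_fiber_seq (A : Ob C) : ~ fiber_finite U A -> forall m, exists l : seq (Ob Cs),
  [/\ List.NoDup l, size l = m & forall X, List.In X l -> Fob U X = A].
Proof.
move=> inf; elim=> [|m [l [nd <- l_fiber]]]; first by exists [::]; split => //; constructor.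
have /existsNP [X notX] : ~ forall X, List.In X l <-> Fob U X = A.
  by move=> l_enum; apply: inf; exists l.
have XA : Fob U X = A by apply: contrapT => nXA; apply: notX; split => [/l_fiber|].
have Xl : ~ List.In X l by move=> Xl; apply: notX; split => // _.
by exists (X :: l); split => //; [constructor | move=> Y [<- | /l_fiber]].
Qed.

Lemma t_deg_fiber_enum (A : Ob C) (l : seq (Ob Cs)) :
  fiber_enum U A l -> (forall X, Fob U X = A -> t_deg X <> None) ->
  t_deg A = osum (map (@t_deg Cs) l).
Proof.
move=> l_enum fin_deg; have [nd l_fiber] := l_enum.
have deg X : List.In X l -> t_deg X = Some (odflt 0 (t_deg X)).
  by move=> /l_fiber /fin_deg; case: t_deg.
rewrite (osum_map_Some deg); apply/t_deg_SomeP; split.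
  by apply: ramsey_bound_fiber_sum l_enum _ => X /deg /t_deg_SomeP [].
move=> n; apply: ramsey_bound_fiber_lower_seq nd _ _ => [X /l_fiber // | X /deg /t_deg_SomeP [] //].
Qed.

Lemma t_deg_fiber_None (A : Ob C) :
  (~ fiber_finite U A \/ exists2 X, Fob U X = A & t_deg X = None) -> t_deg A = None.
Proof.
move=> bad; apply/t_deg_NoneP => n rbA; case: bad => [inf | [X XA /t_deg_NoneP noX]].
  have [l [nd sz l_fiber]] := infinite_fiber_seq inf n.+1.
  suff: \sum_(X <- l) 1 <= n by rewrite sum1_size sz ltnn.
  by apply: ramsey_bound_fiber_lower_seq nd l_fiber _ rbA => X _ m; apply: ramsey_bound_gt0.
suff: \sum_(Y <- [:: X]) n.+1 <= n by rewrite big_seq1 ltnn.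
apply: ramsey_bound_fiber_lower_seq rbA => [| Y [<- | []] | Y [<- | []] m /noX] //.
by constructor => //; constructor.
Qed.

Lemma fiber_sum_None (A : Ob C) :
  (~ fiber_finite U A \/ exists2 X, Fob U X = A & t_deg X = None) -> fiber_sum U A = None.
Proof.
rewrite /fiber_sum; case: pselect => // fin [// | [X XA tX]].
case: (cid fin) => l [_ l_fiber] /=; apply/osum_map_None.
by exists X => //; apply/l_fiber.
Qed.

End Expansion.

Theorem theorem6p3 (Cs C : category) (U : functor Cs C) :
  expansion U -> reasonable U -> unique_restrictions U -> expansion_property U ->
  all_mono C -> directed Cs ->
  forall A : Ob C,
    t_deg A = fiber_sum U A /\
    (t_deg A <> None <->
       (fiber_finite U A /\ forall As : Ob Cs, Fob U As = A -> t_deg As <> None)).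
Proof.
move=> Uexp _ UR EP _ dirCs A.
have [[fin fin_deg] | not_fin] :=
  pselect (fiber_finite U A /\ forall X, Fob U X = A -> t_deg X <> None).
- have deg_enum l : fiber_enum U A l -> t_deg A = osum (map (@t_deg Cs) l).
    by move=> l_enum; apply: t_deg_fiber_enum Uexp UR EP dirCs _ _ l_enum fin_deg.
  have deg_sum : t_deg A = fiber_sum U A.
    by rewrite /fiber_sum; case: pselect => // fin'; apply/deg_enum/(svalP (cid fin')).
  split => //; split => // _; case: fin => l l_enum.
  rewrite (deg_enum l l_enum) => /osum_map_None [X /(proj2 l_enum X) XA].
  exact: fin_deg.
- have bad : ~ fiber_finite U A \/ exists2 X, Fob U X = A & t_deg X = None.
    have [fin | ] := pselect (fiber_finite U A); [right | by left].
    apply: contrapT => noX; apply: not_fin; split => // X XA tX.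
    by apply: noX; exists X.
  rewrite (t_deg_fiber_None Uexp UR EP dirCs bad) (fiber_sum_None bad).
  by split => //; split => // fin_all; case: not_fin.
Qed.
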